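(* Let $p$ be a prime, $d\geq3$ odd, $n\geq2$, $q=p^f$ with $f\in\{1,2,\ldots\}\cup\{\infty\}$ (convention $p^\infty=0$, $f\geq2$ if $p=2$), and let $G=\langle x_1,\ldots,x_d\mid r_0\rangle$ be a one-relator pro-$p$ group (minimal presentation) with $r_0=x_1^q[x_1,{}_n\,x_2][x_2,x_3][x_4,x_5]\cdots[x_{d-1},x_d]\cdot s$, where $s\in S''$ and $S$ is the closed subgroup generated by $x_3,\ldots,x_d$. Then every defined $3$-fold Massey product in $H^\bullet(G,\mathbb{F}_p)$ vanishes if and only if $q\neq3$.
   Context: Commutators $[x,y]=x^{-1}y^{-1}xy$, $[y,{}_k x]$ left-normed; $H''$ is the closed commutator subgroup of $H'$. For $\psi_1,\ldots,\psi_m\in H^1(G,\mathbb{F}_p)=\mathrm{Hom}(G,\mathbb{F}_p)$, $\langle\psi_1,\ldots,\psi_m\rangle\subseteq H^2(G,\mathbb{F}_p)$ is the standard $m$-fold Massey product; it is defined if nonempty and vanishes if it contains $0$. Equivalently, with $\mathbb{U}_{m+1}$ the upper unitriangular $(m+1)\times(m+1)$ matrices over $\mathbb{F}_p$ and $Z$ its center: defined iff there is a continuous homomorphism $G\to\mathbb{U}_{m+1}/Z$ with $(i,i+1)$-entries $\psi_i$, and vanishing iff there is a continuous homomorphism $G\to\mathbb{U}_{m+1}$ with $(i,i+1)$-entries $\psi_i$. *)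

From HB Require Import structures.
From mathcomp Require Import all_boot all_order all_algebra all_fingroup all_solvable.
Set Implicit Arguments. Unset Strict Implicit. Unset Printing Implicit Defensive.
Import GRing.Theory.
Local Open Scope group_scope.

(* Elements of the free pro-p group F on generators x_1..x_d (indexed by 'I_d,
   x_{k+1} <-> index k) are encoded, as usual, as natural families of
   "evaluations" into finite p-groups: an element w of F is the same thing as
   a rule assigning to every tuple g of elements of a finite group generating
   a p-group the value w(g) (the image of w under the unique continuous
   homomorphism F -> <<g>> sending x_i to g_i), compatibly with all group
   morphisms. *)
Record pword (p d : nat) := PWord {
  pw_ev : forall gT : finGroupType, ('I_d -> gT) -> gT;
  pw_nat : forall (gT hT : finGroupType) (D : {group gT})
             (f : {morphism D >-> hT}) (g : 'I_d -> gT),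
      p.-group <<[set g i | i : 'I_d]>> -> (forall i, g i \in D) ->
      f (pw_ev g) = pw_ev (fun i => f (g i));
  (* implied by naturality (apply it to the inclusion of <<g>>); kept for
     convenience *)
  pw_mem : forall (gT : finGroupType) (g : 'I_d -> gT),
      p.-group <<[set g i | i : 'I_d]>> ->
      pw_ev g \in <<[set g i | i : 'I_d]>>
}.

(* s lies in S'', S the closed subgroup generated by x_3, ..., x_d:
   equivalently its image under every continuous morphism into a finite
   p-group lies in the second derived subgroup of the image of S. *)
Definition in_S2 (p d : nat) (s : pword p d) : Prop :=
  forall (gT : finGroupType) (g : 'I_d -> gT),
    p.-group <<[set g i | i : 'I_d]>> ->
    pw_ev s g \in (<<[set g i | i : 'I_d & 2 <= i]>>)^`(2).

(* access generator number k (0-based), 1 if out of range *)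
Definition gat (d : nat) (gT : finGroupType) (g : 'I_d -> gT) (k : nat) : gT :=
  odflt 1%g (omap g (insub k)).

Definition iterc (gT : finGroupType) (y x : gT) (n : nat) : gT :=
  iter n (fun z => [~ z, x]%g) y.

(* evaluation of r_0 = x_1^q [x_1,_n x_2][x_2,x_3][x_4,x_5]...[x_{d-1},x_d] s *)
Definition relator (p d q n : nat) (s : pword p d)
    (gT : finGroupType) (g : 'I_d -> gT) : gT :=
  (gat g 0 ^+ q * iterc (gat g 0) (gat g 1) n
   * (\prod_(1 <= k < d./2.+1) [~ gat g k.*2.-1, gat g k.*2])
   * pw_ev s g)%g.

Definition unitri (p : nat) (u : {'GL_4['F_p]}) : bool :=
  [forall i : 'I_4, forall j : 'I_4,
     ((j < i)%N ==> (GLval u i j == 0%R)) && ((i == j) ==> (GLval u i j == 1%R))].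

Definition U4 (p : nat) : {group {'GL_4['F_p]}} :=
  (<<[set u | unitri u]>>)%G.

Definition Z4 (p : nat) : {group {'GL_4['F_p]}} := ('Z(U4 p))%G.

Definition superdiag (p d : nat) (psi : 'I_3 -> 'I_d -> 'F_p)
    (M : 'M['F_p]_4) (j : 'I_d) : Prop :=
  forall i : 'I_3, M (inord i) (inord i.+1) = psi i j.

(* For G = < x_1..x_d | r >: every defined 3-fold Massey product
   <psi_1,psi_2,psi_3> vanishes.  Continuous homomorphisms G -> P (P a finite
   p-group) are tuples of images of the generators satisfying the relator. *)
Definition massey3_vanish (p d : nat)
    (rel : forall gT : finGroupType, ('I_d -> gT) -> gT) : Prop :=
  forall psi : 'I_3 -> 'I_d -> 'F_p,
    (exists u : 'I_d -> coset_of (Z4 p),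
        [/\ forall j, u j \in (U4 p / Z4 p)%g,
            rel _ u = 1%g &
            forall j, exists2 h, h \in U4 p &
               coset (Z4 p) h = u j /\ superdiag psi (GLval h) j]) ->
    (exists g : 'I_d -> {'GL_4['F_p]},
        [/\ forall j, g j \in U4 p,
            rel _ g = 1%g &
            forall j, superdiag psi (GLval (g j)) j]).

From mathcomp Require Import all_boot all_order all_algebra all_fingroup all_solvable.
From mathcomp Require Import ring zify.
Set Implicit Arguments. Unset Strict Implicit. Unset Printing Implicit Defensive.
Import GRing.Theory.

(* Everything happens in U = U_4(F_p), computed in explicit coordinates. U is
   metabelian, so the factor s in S'' of the relator vanishes in U and in U/Z.
   A defined Massey product yields images of the generators in U whose relator
   is central. If some x_i with i >= 2 has a nonzero (1,2) or (3,4) entry, then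
   multiplying its commutator partner by a matrix supported on the (1,3) and
   (2,4) entries changes the relator by an arbitrary central factor without
   touching the superdiagonal, so the relator can be made trivial. Otherwise
   x_2, ..., x_d lie in an abelian subgroup containing U', the Engel commutator
   and the commutator product vanish, and the relator is x_1^q; it is trivial
   because U has exponent p^2, and exponent p for p >= 5, which covers every
   admissible q <> 3. For q = 3 = p, sending x_1 to I + E12 + E23 + E34 and the
   other generators to 1 is a lift modulo Z, but every lift of these
   superdiagonals has relator x_1^3, whose (1,4) entry is 1. *)

Section IteratedCommutator.
Variable gT : finGroupType.

Lemma iterc_eq1 (y x : gT) m n : iterc y x m = 1%g -> m <= n -> iterc y x n = 1%g.
Proof.
move=> y1 /subnK <-; elim: (n - m) => [|k IH] //.
by rewrite addSn /iterc iterS -/(iterc y x (k + m)) IH comm1g.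
Qed.

Lemma iterc_mem (G : {group gT}) y x n : y \in G -> x \in G -> iterc y x n \in G.
Proof. by move=> yG xG; elim: n => // n IH; rewrite /iterc iterS groupR. Qed.

Lemma morph_iterc (rT : finGroupType) (G : {group gT}) (f : {morphism G >-> rT}) y x n :
  y \in G -> x \in G -> f (iterc y x n) = iterc (f y) (f x) n.
Proof.
move=> yG xG; elim: n => // n IH.
by rewrite /iterc !iterS -/(iterc y x n) -/(iterc (f y) (f x) n) morphR ?IH ?iterc_mem.
Qed.

End IteratedCommutator.

(* The relator without its factor s: unlike pw_ev s, this part is determined by
   the values of the tuple, so it commutes with morphisms pointwise. *)
Definition relator_core (d q n : nat) (gT : finGroupType) (g : 'I_d -> gT) : gT :=
  (gat g 0 ^+ q * iterc (gat g 0) (gat g 1) n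
   * \prod_(1 <= k < d./2.+1) [~ gat g k.*2.-1, gat g k.*2])%g.

Section GeneratorTuples.
Variables (d : nat) (gT : finGroupType).
Implicit Types (h : 'I_d -> gT) (G : {group gT}).
Local Open Scope group_scope.

Lemma gat_ord h (i : 'I_d) : gat h i = h i.
Proof. by rewrite /gat valK. Qed.

Lemma gat_nat h k (k_lt : (k < d)%N) : gat h k = h (Ordinal k_lt).
Proof. by rewrite /gat insubT. Qed.

Lemma gat_mem G h m k :
  (forall i : 'I_d, (m <= i)%N -> h i \in G) -> (m <= k)%N -> gat h k \in G.
Proof.
by rewrite /gat => hG mk; case: insubP => [i _ iE | _] /=; rewrite ?group1 ?hG ?iE.
Qed.

Lemma gat_morph (rT : finGroupType) G (f : {morphism G >-> rT}) h (u : 'I_d -> rT) k :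
  (forall i, u i = f (h i)) -> gat u k = f (gat h k).
Proof. by rewrite /gat => uE; case: insubP => [i _ _ | _] /=; rewrite ?uE ?morph1. Qed.

Definition mulg_at h (j : nat) (e : gT) : 'I_d -> gT :=
  fun l => if val l == j then h l * e else h l.

Lemma gat_mulg_at h j e k : (j < d)%N ->
  gat (mulg_at h j e) k = if k == j then gat h k * e else gat h k.
Proof.
move=> jd; rewrite /gat /mulg_at; case: insubP => [i _ <- | kd] //=.
by case: eqP => // kj; move: kd; rewrite kj jd.
Qed.

Lemma mulg_at_mem G h j e :
  (forall l, h l \in G) -> e \in G -> forall l, mulg_at h j e l \in G.
Proof. by move=> hG eG l; rewrite /mulg_at; case: ifP; rewrite ?groupM. Qed.

Lemma big_nat_mulg_central (F F' : nat -> gT) a b k0 c :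
  (a <= k0 < b)%N -> (forall k, (a <= k < b)%N -> k != k0 -> F' k = F k) ->
  F' k0 = F k0 * c -> (forall k, commute c (F k)) ->
  \prod_(a <= k < b) F' k = (\prod_(a <= k < b) F k) * c.
Proof.
move=> /andP[ak0 k0b] FF' F'k0 cF.
have split_at (G : nat -> gT) : \prod_(a <= k < b) G k =
    \prod_(a <= k < k0) G k * (G k0 * \prod_(k0.+1 <= k < b) G k).
  by rewrite (big_cat_nat ak0 (ltnW k0b)) (big_ltn k0b).
have lowE : \prod_(a <= k < k0) F' k = \prod_(a <= k < k0) F k.
  by apply: eq_big_nat => k /andP[ak kk0]; rewrite FF' ?ltn_eqF // ak (ltn_trans kk0).
have highE : \prod_(k0.+1 <= k < b) F' k = \prod_(k0.+1 <= k < b) F k.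
  apply: eq_big_nat => k /andP[k0k kb]; rewrite FF' ?gtn_eqF //.
  by rewrite kb (leq_trans ak0) // ltnW.
have cHigh : commute c (\prod_(k0.+1 <= k < b) F k).
  by apply: (big_ind (commute c)) => // [|x y]; [exact: commute1 | exact: commuteM].
by rewrite !split_at lowE highE F'k0 -!mulgA cHigh.
Qed.

Variables (q n : nat).

Lemma relatorE p (s : pword p d) h : relator q n s h = relator_core q n h * pw_ev s h.
Proof. by []. Qed.

Lemma relator_core_mem G h : (forall i, h i \in G) -> relator_core q n h \in G.
Proof.
move=> hG; have gatG k : gat h k \in G by apply: gat_mem (leq0n k).
by rewrite !groupM ?groupX ?iterc_mem // group_prod // => k _; rewrite groupR.
Qed.

Lemma morph_relator_core (rT : finGroupType) G (f : {morphism G >-> rT}) h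
    (u : 'I_d -> rT) :
  (forall i, h i \in G) -> (forall i, u i = f (h i)) ->
  f (relator_core q n h) = relator_core q n u.
Proof.
move=> hG uE; have gatG k : gat h k \in G by apply: gat_mem (leq0n k).
have gatE k : gat u k = f (gat h k) by apply: gat_morph.
have prodG : \prod_(1 <= k < d./2.+1) [~ gat h k.*2.-1, gat h k.*2] \in G.
  by rewrite group_prod // => k _; rewrite groupR.
rewrite /relator_core !morphM ?groupM ?groupX ?iterc_mem //.
rewrite morphX // morph_iterc // morph_prod => [|k _]; last by rewrite groupR.
by rewrite !gatE; congr (_ * _ * _); apply: eq_bigr => k _; rewrite morphR // !gatE.
Qed.

End GeneratorTuples.

Lemma pw_ev_der2_eq1 p d (s : pword p d) (gT : finGroupType) (G : {group gT})
    (g : 'I_d -> gT) :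
  in_S2 s -> (p.-group G)%g -> (G^`(2) = 1)%g -> (forall i, g i \in G) -> pw_ev s g = 1%g.
Proof.
move=> sS2 pG G2 gG.
have genG (P : pred 'I_d) : (<<[set g i | i in P]>> \subset G)%g.
  by rewrite gen_subG; apply/subsetP => _ /imsetP[i _ ->].
move/(subsetP (dergS 2 (genG _))): (sS2 _ g (pgroupS (genG _) pG)).
by rewrite G2 inE => /eqP.
Qed.

Section UnitriangularCoordinates.
Variable p : nat.
Local Notation F := 'F_p.
Local Notation GL := {'GL_4[F]}.
Local Open Scope ring_scope.

Record ut4 := UT4 { u12 : F; u23 : F; u34 : F; u13 : F; u24 : F; u14 : F }.

Definition ut4_entry (v : ut4) (i j : nat) : F :=
  match i, j with
  | 0, 0 | 1, 1 | 2, 2 | 3, 3 => 1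
  | 0, 1 => u12 v | 1, 2 => u23 v | 2, 3 => u34 v
  | 0, 2 => u13 v | 1, 3 => u24 v | 0, 3 => u14 v
  | _, _ => 0
  end.

Definition ut4_mx (v : ut4) : 'M[F]_4 := \matrix_(i, j) ut4_entry v i j.

Definition ut4_of_mx (M : 'M[F]_4) : ut4 :=
  UT4 (M (inord 0) (inord 1)) (M (inord 1) (inord 2)) (M (inord 2) (inord 3))
      (M (inord 0) (inord 2)) (M (inord 1) (inord 3)) (M (inord 0) (inord 3)).

Definition ut4_one : ut4 := UT4 0 0 0 0 0 0.

Definition ut4_mul (v w : ut4) : ut4 :=
  UT4 (u12 v + u12 w) (u23 v + u23 w) (u34 v + u34 w)
      (u13 v + u13 w + u12 v * u23 w) (u24 v + u24 w + u23 v * u34 w)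
      (u14 v + u14 w + u12 v * u24 w + u13 v * u34 w).

Definition ut4_inv (v : ut4) : ut4 :=
  UT4 (- u12 v) (- u23 v) (- u34 v)
      (- u13 v + u12 v * u23 v) (- u24 v + u23 v * u34 v)
      (- u14 v + u12 v * u24 v + u13 v * u34 v - u12 v * u23 v * u34 v).

Definition ut4_comm (v w : ut4) : ut4 :=
  ut4_mul (ut4_inv v) (ut4_mul (ut4_inv w) (ut4_mul v w)).

Definition ut4_exp (v : ut4) (k : nat) : ut4 :=
  UT4 (k%:R * u12 v) (k%:R * u23 v) (k%:R * u34 v)
      (k%:R * u13 v + 'C(k, 2)%:R * (u12 v * u23 v))
      (k%:R * u24 v + 'C(k, 2)%:R * (u23 v * u34 v))
      (k%:R * u14 v + 'C(k, 2)%:R * (u12 v * u24 v + u13 v * u34 v)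
       + 'C(k, 3)%:R * (u12 v * u23 v * u34 v)).

Definition ut4_center (t : F) : ut4 := UT4 0 0 0 0 0 t.
Definition ut4_corner (x y : F) : ut4 := UT4 0 0 0 x y 0.

Lemma ut4_ext v w :
  u12 v = u12 w -> u23 v = u23 w -> u34 v = u34 w ->
  u13 v = u13 w -> u24 v = u24 w -> u14 v = u14 w -> v = w.
Proof. by case: v => ??????; case: w => ?????? /= -> -> -> -> -> ->. Qed.

Ltac ut4_ring := apply: ut4_ext => /=; ring.

Lemma ut4_mxM v w : ut4_mx v *m ut4_mx w = ut4_mx (ut4_mul v w).
Proof.
apply/matrixP => i j; rewrite !mxE !big_ord_recl big_ord0 !mxE.
by case: i => [[|[|[|[|i]]]] Hi] //; case: j => [[|[|[|[|j]]]] Hj] //=; ring.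
Qed.

Lemma ut4_mx1 : ut4_mx ut4_one = 1%:M.
Proof.
apply/matrixP => i j; rewrite !mxE.
by case: i => [[|[|[|[|i]]]] Hi] //; case: j => [[|[|[|[|j]]]] Hj].
Qed.

Lemma ut4_mxK : cancel ut4_mx ut4_of_mx.
Proof. by case=> *; rewrite /ut4_of_mx !mxE !inordK. Qed.

Lemma ut4_mx_inj : injective ut4_mx.
Proof. exact: can_inj ut4_mxK. Qed.

Lemma ut4_mx_unit v : ut4_mx v \is a GRing.unit.
Proof.
apply/GRing.unitrP; exists (ut4_mx (ut4_inv v)).
have inv_r : ut4_mul v (ut4_inv v) = ut4_one by ut4_ring.
have inv_l : ut4_mul (ut4_inv v) v = ut4_one by ut4_ring.
by rewrite -!mulmxE !ut4_mxM inv_r inv_l ut4_mx1.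
Qed.

Definition utGL (v : ut4) : GL := FinRing.Unit (ut4_mx_unit v).

Lemma utGL_inj : injective utGL.
Proof. by move=> v w /(congr1 val)/ut4_mx_inj. Qed.

Lemma utGL1 : utGL ut4_one = 1%g.
Proof. by apply: val_inj; rewrite /= ut4_mx1. Qed.

Lemma utGLM v w : (utGL v * utGL w)%g = utGL (ut4_mul v w).
Proof. by apply: val_inj; rewrite [LHS]GL_ME /= -mulmxE ut4_mxM. Qed.

Lemma utGLV v : (utGL v)^-1%g = utGL (ut4_inv v).
Proof.
apply: (mulgI (utGL v)); rewrite mulgV utGLM -utGL1; congr utGL; ut4_ring.
Qed.

Lemma utGLR v w : [~ utGL v, utGL w]%g = utGL (ut4_comm v w).
Proof. by rewrite commgEl conjgE !utGLV !utGLM. Qed.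

Lemma utGLX v k : (utGL v ^+ k)%g = utGL (ut4_exp v k).
Proof.
elim: k => [|k IH].
  by rewrite expg0 -utGL1; congr utGL; apply: ut4_ext; rewrite /= !mul0r ?addr0.
rewrite expgSr IH utGLM; congr utGL; rewrite /ut4_exp !binS bin1 !natrD; ut4_ring.
Qed.

Lemma commute_utGL_center t w : commute (utGL (ut4_center t)) (utGL w).
Proof. by rewrite /commute !utGLM; congr utGL; ut4_ring. Qed.

Lemma superdiag_utGL d (psi : 'I_3 -> 'I_d -> F) v j :
  superdiag psi (GLval (utGL v)) j <->
  [/\ u12 v = psi ord0 j, u23 v = psi (inord 1) j & u34 v = psi (inord 2) j].
Proof.
rewrite /superdiag /=; split=> [sd|[s12 s23 s34] [[|[|[|i]]] lti]] //.
- split; first by have := sd ord0; rewrite !mxE !inordK.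
  + by have := sd (inord 1); rewrite !mxE !inordK.
  + by have := sd (inord 2); rewrite !mxE !inordK.
- by rewrite !mxE !inordK //= s12; congr psi; apply: val_inj.
- by rewrite !mxE !inordK //= s23; congr psi; apply: val_inj; rewrite /= inordK.
- by rewrite !mxE !inordK //= s34; congr psi; apply: val_inj; rewrite /= inordK.
Qed.

Definition ut4_set (P : pred ut4) : {set GL} :=
  [set g : GL | (GLval g == ut4_mx (ut4_of_mx (GLval g))) && P (ut4_of_mx (GLval g))].

Lemma ut4_setP (P : pred ut4) (g : GL) : reflect (exists2 v, P v & g = utGL v) (g \in ut4_set P).
Proof.
rewrite inE; apply: (iffP andP) => [[/eqP gE Pg]|[v Pv ->]].
  by exists (ut4_of_mx (GLval g)) => //; apply: val_inj.
by rewrite /= ut4_mxK eqxx.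
Qed.

Lemma mem_ut4_set (P : pred ut4) v : (utGL v \in ut4_set P) = P v.
Proof. by rewrite inE /= ut4_mxK eqxx. Qed.

Lemma group_set_ut4_set (P : pred ut4) :
  P ut4_one -> (forall v w, P v -> P w -> P (ut4_mul v w)) -> group_set (ut4_set P).
Proof.
move=> P1 PM; apply/group_setP; split; first by rewrite -utGL1 mem_ut4_set.
by move=> _ _ /ut4_setP[v Pv ->] /ut4_setP[w Pw ->]; rewrite utGLM mem_ut4_set PM.
Qed.

Lemma unitriE (g : GL) : unitri g = (GLval g == ut4_mx (ut4_of_mx (GLval g))).
Proof.
apply/idP/eqP => [/forallP ut|gE]; last first.
  rewrite /unitri gE; apply/forallP => i; apply/forallP => j; rewrite !mxE.
  by case: i => [[|[|[|[|i]]]] Hi] //; case: j => [[|[|[|[|j]]]] Hj].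
apply/matrixP => i j; move/forallP/(_ j): (ut i).
rewrite !mxE /ut4_of_mx -(inord_val i) -(inord_val j).
case: i => [[|[|[|[|i]]]] Hi] //; case: j => [[|[|[|[|j]]]] Hj] //=;
  rewrite ?inordK //= ?eqxx //=.
all: first [by move/eqP | by case/andP => /eqP].
Qed.

Lemma U4E : U4 p = ut4_set predT :> {set GL}.
Proof.
rewrite /U4 /=; have -> : [set u | unitri u] = ut4_set predT.
  by apply/setP => u; rewrite !inE unitriE andbT.
by apply: gen_set_id; apply: group_set_ut4_set.
Qed.

Lemma U4P (g : GL) : reflect (exists v, g = utGL v) (g \in U4 p).
Proof.
rewrite U4E; apply: (iffP (ut4_setP _ _)) => [[v _ ->]|[v ->]]; first by exists v.
by exists v.
Qed.

Lemma utGL_U4 v : utGL v \in U4 p.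
Proof. by apply/U4P; exists v. Qed.

Lemma Z4P (g : GL) : reflect (exists t, g = utGL (ut4_center t)) (g \in Z4 p).
Proof.
rewrite /Z4 /=; apply: (iffP (centerP _ _)) => [[/U4P[v ->] cUv] | [t ->]]; last first.
  split=> [|_ /U4P[w ->]]; [exact: utGL_U4 | exact: commute_utGL_center].
have comm_v w : ut4_mul v w = ut4_mul w v.
  by apply: utGL_inj; rewrite -!utGLM; apply: cUv; apply: utGL_U4.
have E1 := comm_v (UT4 1 0 0 0 0 0); have E2 := comm_v (UT4 0 1 0 0 0 0).
have E3 := comm_v (UT4 0 0 1 0 0 0).
have eq0 (a b t : F) : a = b -> a - b = t \/ b - a = t -> t = 0.
  by move=> -> [] <-; rewrite subrr.
exists (u14 v); congr utGL; apply: ut4_ext => //=.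
- by apply: eq0 (congr1 u13 E2) _; left; rewrite /=; ring.
- by apply: eq0 (congr1 u13 E1) _; right; rewrite /=; ring.
- by apply: eq0 (congr1 u24 E2) _; right; rewrite /=; ring.
- by apply: eq0 (congr1 u14 E3) _; left; rewrite /=; ring.
- by apply: eq0 (congr1 u14 E1) _; right; rewrite /=; ring.
Qed.

Definition u12_u34_eq0 (v : ut4) : bool := (u12 v == 0) && (u34 v == 0).

Lemma group_set_B4 : group_set (ut4_set u12_u34_eq0).
Proof.
apply: group_set_ut4_set => [|v w /andP[/eqP a0 /eqP c0] /andP[/eqP a0' /eqP c0']].
  by rewrite /u12_u34_eq0 /= eqxx.
by rewrite /u12_u34_eq0 /= a0 c0 a0' c0' addr0 eqxx.
Qed.

Canonical B4 := Group group_set_B4.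

Lemma B4_abelian : abelian B4.
Proof.
apply/centsP => _ /ut4_setP[v /andP[/eqP a0 /eqP c0] ->].
move=> _ /ut4_setP[w /andP[/eqP a0' /eqP c0'] ->].
by rewrite /commute !utGLM; congr utGL; apply: ut4_ext => /=; rewrite ?a0 ?c0 ?a0' ?c0'; ring.
Qed.

Lemma commg_U4_B4 g h : g \in U4 p -> h \in U4 p -> [~ g, h]%g \in B4.
Proof.
move=> /U4P[v ->] /U4P[w ->]; rewrite utGLR mem_ut4_set.
by apply/andP; split; apply/eqP; rewrite /=; ring.
Qed.

Lemma der2_U4 : (U4 p)^`(2)%g = 1%g.
Proof.
rewrite dergSn; apply/derG1P; apply: abelianS B4_abelian.
rewrite /= derg1 gen_subG; apply/subsetP => _ /imset2P[g h Ug Uh ->].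
exact: commg_U4_B4.
Qed.

Lemma superdiag_B4 d (psi : 'I_3 -> 'I_d -> F) (g : GL) j :
  g \in U4 p -> psi ord0 j = 0 -> psi (inord 2) j = 0 -> superdiag psi (GLval g) j ->
  g \in B4.
Proof.
move=> /U4P[v ->] a0 c0 /superdiag_utGL[a _ c].
by rewrite mem_ut4_set /u12_u34_eq0 a c a0 c0 eqxx.
Qed.

Definition ut4_iterc2 (v w : ut4) : F :=
  (u12 v * u23 w - u12 w * u23 v) * u34 w - u12 w * (u23 v * u34 w - u23 w * u34 v).

Lemma iterc2_utGL v w : iterc (utGL v) (utGL w) 2 = utGL (ut4_center (ut4_iterc2 v w)).
Proof. by rewrite /iterc /= !utGLR /ut4_iterc2; congr utGL; ut4_ring. Qed.

Lemma iterc_U4_ge3 (y x : GL) n : y \in U4 p -> x \in U4 p -> (3 <= n)%N -> iterc y x n = 1%g.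
Proof.
move=> /U4P[v ->] /U4P[w ->] n_ge3; apply: (iterc_eq1 _ n_ge3).
by rewrite /iterc iterS -/(iterc _ _ 2) iterc2_utGL; apply/eqP/commgP/commute_utGL_center.
Qed.

Lemma iterc_B4 (y x : GL) n : y \in U4 p -> x \in B4 -> (2 <= n)%N -> iterc y x n = 1%g.
Proof.
move=> /U4P[v ->] /ut4_setP[w /andP[/eqP a0 /eqP c0] ->] n_ge2.
apply: (iterc_eq1 _ n_ge2).
by rewrite iterc2_utGL /ut4_iterc2 a0 c0 -utGL1; congr utGL; ut4_ring.
Qed.

Lemma iterc_utGL_corner v w x y n : (2 <= n)%N ->
  iterc (utGL v) (utGL w * utGL (ut4_corner x y)) n = iterc (utGL v) (utGL w) n.
Proof.
rewrite leq_eqVlt => /orP[/eqP <- | n3]; last by rewrite !iterc_U4_ge3 ?groupM ?utGL_U4.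
by rewrite utGLM !iterc2_utGL; congr (utGL (ut4_center _)); rewrite /ut4_iterc2 /=; ring.
Qed.

Lemma commg_corner_r v w x y :
  [~ utGL v, utGL w * utGL (ut4_corner x y)]%g =
  ([~ utGL v, utGL w] * utGL (ut4_center (u12 v * y - x * u34 v)))%g.
Proof. by rewrite !utGLM !utGLR utGLM; congr utGL; ut4_ring. Qed.

Lemma commg_corner_l v w x y :
  [~ utGL w * utGL (ut4_corner x y), utGL v]%g =
  ([~ utGL w, utGL v] * utGL (ut4_center (x * u34 v - u12 v * y)))%g.
Proof. by rewrite !utGLM !utGLR utGLM; congr utGL; ut4_ring. Qed.

Lemma corner_solve v t : ~~ u12_u34_eq0 v -> exists x y, u12 v * y - x * u34 v = t.
Proof.
rewrite negb_and => /orP[a0 | c0].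
  by exists 0, (t / u12 v); rewrite mul0r subr0 mulrC divfK.
by exists (- t / u34 v), 0; rewrite mulr0 sub0r divfK // opprK.
Qed.

Lemma superdiag_mul_corner d (psi : 'I_3 -> 'I_d -> F) (g : GL) j x y :
  g \in U4 p -> superdiag psi (GLval g) j ->
  superdiag psi (GLval (g * utGL (ut4_corner x y))%g) j.
Proof. by move=> /U4P[v ->]; rewrite utGLM !superdiag_utGL /= !addr0. Qed.

Section PrimeCharacteristic.
Hypothesis p_pr : prime p.

Lemma ut4_exp_eq1 v k :
  (p %| k)%N -> (p %| 'C(k, 2))%N -> (p %| 'C(k, 3))%N -> ut4_exp v k = ut4_one.
Proof.
rewrite !(dvdn_pcharf (pchar_Fp p_pr)) => /eqP k0 /eqP k2 /eqP k3.
by rewrite /ut4_exp k0 k2 k3; ut4_ring.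
Qed.

Lemma prime_dvd_bin_sqr k : (0 < k)%N -> ~~ (p ^ 2 %| k)%N -> (p %| 'C(p ^ 2, k))%N.
Proof.
move=> k_gt0; apply: contraR => pNdvd.
have coC : coprime (p ^ 2) 'C(p ^ 2, k) by rewrite coprimeXl // prime_coprime.
have := mul_bin_diag (p ^ 2) k.-1; rewrite prednK // => kC.
by rewrite -(Gauss_dvdl _ coC) -kC dvdn_mulr.
Qed.

Lemma expg_U4_sqr g : g \in U4 p -> (g ^+ (p ^ 2))%g = 1%g.
Proof.
have p2_gt3 : (3 < p ^ 2)%N by have := prime_gt1 p_pr; lia.
move=> /U4P[v ->]; rewrite utGLX ut4_exp_eq1 ?utGL1 ?dvdn_exp //.
  by apply: prime_dvd_bin_sqr; rewrite // gtnNdvd // (leq_trans _ p2_gt3).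
by apply: prime_dvd_bin_sqr; rewrite // gtnNdvd.
Qed.

Lemma expg_U4_prime g : (3 < p)%N -> g \in U4 p -> (g ^+ p)%g = 1%g.
Proof.
move=> p_gt3 /U4P[v ->].
by rewrite utGLX ut4_exp_eq1 ?utGL1 ?dvdnn ?prime_dvd_bin // (leq_trans _ p_gt3).
Qed.

Lemma pgroup_U4 : (p.-group (U4 p))%g.
Proof.
apply/pgroupP => r r_pr r_dvd; have [g Ug og] := Cauchy r_pr r_dvd.
have : (#[g]%g %| p ^ 2)%N by rewrite order_dvdn expg_U4_sqr.
by rewrite og Euclid_dvdX // dvdn_prime2 // andbT.
Qed.

End PrimeCharacteristic.

End UnitriangularCoordinates.

Lemma ut4_exp3 (v : ut4 3) : ut4_exp v 3 = ut4_center (u12 v * u23 v * u34 v)%R.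
Proof.
have three0 : (3%:R : 'F_3)%R = 0%R by exact: pchar_Fp_0.
by rewrite /ut4_exp three0 binn; apply: ut4_ext => /=; ring.
Qed.

Section UnitriangularRelator.
Variables (p d q n : nat).
Local Notation GL := {'GL_4['F_p]}.
Local Open Scope group_scope.
Implicit Types h : 'I_d -> GL.

Lemma relator_core_B4 h : (2 <= n)%N -> (forall i, h i \in U4 p) ->
  (forall i : 'I_d, (1 <= i)%N -> h i \in B4 p) -> relator_core q n h = gat h 0 ^+ q.
Proof.
move=> n_ge2 hU hB; rewrite /relator_core.
have h0U : gat h 0 \in U4 p by apply: gat_mem (fun i _ => hU i) (leq0n 0).
rewrite iterc_B4 ?(gat_mem hB) // mulg1 big_nat_cond big1 ?mulg1 //.
move=> k /andP[/andP[k_ge1 _] _]; apply/eqP/commgP.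
by apply: (centsP (B4_abelian p)); apply: (gat_mem hB); lia.
Qed.

Lemma commg_pair_corner h k0 t : (forall l, h l \in U4 p) ->
  (1 <= k0)%N -> (k0.*2 < d)%N -> ~~ ((gat h k0.*2.-1 \in B4 p) && (gat h k0.*2 \in B4 p)) ->
  exists j x y, ((j == k0.*2.-1) || (j == k0.*2)) /\
    let g := mulg_at h j (utGL (ut4_corner x y)) in
    [~ gat g k0.*2.-1, gat g k0.*2] = [~ gat h k0.*2.-1, gat h k0.*2] * utGL (ut4_center t).
Proof.
move=> hU k0_ge1 k0_lt not_B4; set a := k0.*2.-1; set b := k0.*2.
have /U4P[va haE] : gat h a \in U4 p by apply: gat_mem (fun i _ => hU i) (leq0n a).
have /U4P[vb hbE] : gat h b \in U4 p by apply: gat_mem (fun i _ => hU i) (leq0n b).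
have ba : (b == a) = false by apply/eqP; rewrite /a /b; lia.
case: (boolP (u12_u34_eq0 va)) => [va0 | vaN].
  have vbN : ~~ u12_u34_eq0 vb by apply: contra not_B4; rewrite haE hbE !mem_ut4_set va0.
  have [x [y xyE]] := corner_solve (- t)%R vbN.
  exists a, x, y; split; first by rewrite eqxx.
  rewrite /= !gat_mulg_at ?ba ?eqxx /a; try lia.
  by rewrite -/a haE hbE commg_corner_l -opprB xyE opprK.
have [x [y xyE]] := corner_solve t vaN.
exists b, x, y; split; first by rewrite eqxx orbT.
rewrite /= !gat_mulg_at ?eqxx 1?eq_sym ?ba //.
by rewrite haE hbE commg_corner_r xyE.
Qed.

Lemma relator_core_corner h k0 t : (2 <= n)%N -> (forall l, h l \in U4 p) ->
  (1 <= k0)%N -> (k0.*2 < d)%N ->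
  ~~ ((gat h k0.*2.-1 \in B4 p) && (gat h k0.*2 \in B4 p)) ->
  exists j x y, relator_core q n (mulg_at h j (utGL (ut4_corner x y))) =
                relator_core q n h * utGL (ut4_center t).
Proof.
move=> n_ge2 hU k0_ge1 k0_lt not_B4.
have [j [x [y [jk0 commE]]]] := commg_pair_corner t hU k0_ge1 k0_lt not_B4.
exists j, x, y; set g := mulg_at h j _.
have gatU k : gat h k \in U4 p by apply: gat_mem (fun i _ => hU i) (leq0n k).
have j_lt : (j < d)%N by case/orP: jk0 => /eqP ->; lia.
have j_ge1 : (1 <= j)%N by case/orP: jk0 => /eqP ->; lia.
have gat0 : gat g 0 = gat h 0 by rewrite gat_mulg_at // ltn_eqF.
have iterE : iterc (gat g 0) (gat g 1) n = iterc (gat h 0) (gat h 1) n.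
  rewrite gat0 gat_mulg_at //; case: (_ == _) => //.
  have /U4P[v0 ->] := gatU 0%N; have /U4P[v1 ->] := gatU 1%N.
  exact: iterc_utGL_corner.
have prodE : \prod_(1 <= k < d./2.+1) [~ gat g k.*2.-1, gat g k.*2] =
    (\prod_(1 <= k < d./2.+1) [~ gat h k.*2.-1, gat h k.*2]) * utGL (ut4_center t).
  apply: (big_nat_mulg_central (k0 := k0)) => //; first by apply/andP; split; lia.
    move=> k _ kk0; rewrite !gat_mulg_at //.
    by case/orP: jk0 => /eqP ->; case: ifP => [/eqP|_]; try lia;
      case: ifP => [/eqP|_] //; lia.
  move=> k; have /U4P[w ->] := groupR (gatU k.*2.-1) (gatU k.*2).
  exact: commute_utGL_center.
by rewrite /relator_core iterE gat0 prodE !mulgA.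
Qed.

End UnitriangularRelator.

Section MasseyProducts.
Variables (p d q n : nat) (s : pword p d).
Hypotheses (p_pr : prime p) (sS2 : in_S2 s).
Local Notation GL := {'GL_4['F_p]}.
Local Open Scope group_scope.

Lemma relator_U4 (h : 'I_d -> GL) :
  (forall i, h i \in U4 p) -> relator q n s h = relator_core q n h.
Proof.
move=> hU; rewrite relatorE (pw_ev_der2_eq1 sS2 (pgroup_U4 p_pr) (der2_U4 p) hU).
exact: mulg1.
Qed.

Lemma U4_norm_Z4 : U4 p \subset 'N(Z4 p).
Proof. exact: normal_norm (center_normal _). Qed.

Lemma relator_coset_eq1 (h : 'I_d -> GL) (u : 'I_d -> coset_of (Z4 p)) :
  (forall i, h i \in U4 p) -> (forall i, u i = coset (Z4 p) (h i)) ->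
  relator q n s u = 1 <-> relator_core q n h \in Z4 p.
Proof.
move=> hU uE; have hN i : h i \in 'N(Z4 p) by apply: subsetP U4_norm_Z4 _ (hU i).
have uQ i : u i \in U4 p / Z4 p by rewrite uE mem_quotient.
have pQ : p.-group (U4 p / Z4 p) by apply: quotient_pgroup; apply: pgroup_U4.
have der2Q : (U4 p / Z4 p)^`(2) = 1.
  by rewrite -quotient_der ?U4_norm_Z4 // der2_U4 quotient1.
rewrite relatorE (pw_ev_der2_eq1 sS2 pQ der2Q uQ) mulg1.
rewrite -(morph_relator_core q n (f := coset_morphism (Z4 p)) hN uE) /=.
split=> [|coreZ]; last exact: coset_id.
by apply: coset_idr; apply: relator_core_mem.
Qed.

Lemma massey3_vanish_of_exponent :
  odd d -> (2 <= n)%N -> (forall g, g \in U4 p -> g ^+ q = 1) ->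
  massey3_vanish p (relator q n s).
Proof.
move=> d_odd n_ge2 expq psi [u [_ ru lift]].
have [h hU hl] := fin_all_exists2 lift.
have hsd j : superdiag psi (GLval (h j)) j := (hl j).2.
have /Z4P[z coreE] : relator_core q n h \in Z4 p.
  by apply/(relator_coset_eq1 hU (fun i => esym (hl i).1)).
case: (boolP [forall i : 'I_d, (1 <= i)%N ==> (h i \in B4 p)]) => [/forallP allB | ].
  exists h; split => //; rewrite relator_U4 // relator_core_B4 //.
    by apply: expq; apply: gat_mem (fun i _ => hU i) (leq0n 0).
  by move=> i; apply/implyP.
case/forallPn => i; rewrite negb_imply => /andP[i_ge1 hiN].
(* h i is the image of x_(i+1), which occurs in the k0-th commutator. *)
set k0 := i.+1./2.
have k0_ge1 : (1 <= k0)%N by rewrite /k0; lia.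
have k0_lt : (k0.*2 < d)%N.
  by have := ltn_ord i; have := odd_double_half d; rewrite d_odd /k0; lia.
have notB : ~~ ((gat h k0.*2.-1 \in B4 p) && (gat h k0.*2 \in B4 p)).
  have : (i == k0.*2.-1 :> nat) || (i == k0.*2 :> nat) by apply/orP; rewrite /k0; lia.
  by case/orP => /eqP <-; rewrite gat_ord (negbTE hiN) // andbF.
have [j [x [y coreE']]] := relator_core_corner q (- z)%R n_ge2 hU k0_ge1 k0_lt notB.
have gU := mulg_at_mem j hU (utGL_U4 (ut4_corner x y)).
exists (mulg_at h j (utGL (ut4_corner x y))); split => //.
  rewrite relator_U4 // coreE' coreE utGLM -utGL1; congr utGL.
  by apply: ut4_ext => /=; ring.
by move=> l; rewrite /mulg_at; case: ifP => // _; apply: superdiag_mul_corner.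
Qed.

End MasseyProducts.

Lemma massey3_not_vanish_F3 d n (s : pword 3 d) :
  (0 < d)%N -> (2 <= n)%N -> in_S2 s -> ~ massey3_vanish 3 (relator 3 n s).
Proof.
move=> d_gt0 n_ge2 sS2 vanish.
pose psi (i : 'I_3) (j : 'I_d) : 'F_3 := ((val j == 0%N)%:R)%R.
have core_lift (g : 'I_d -> {'GL_4['F_3]}) :
    (forall i, g i \in U4 3) -> (forall i, superdiag psi (GLval (g i)) i) ->
    relator_core 3 n g = utGL (ut4_center 1%R).
  move=> gU gsd; rewrite relator_core_B4 // => [|i i_ge1]; last first.
    by apply: superdiag_B4 (gsd i); rewrite ?gU // /psi gtn_eqF.
  have /U4P[w gE] := gU (Ordinal d_gt0); rewrite (gat_nat _ d_gt0) gE.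
  move: (gsd (Ordinal d_gt0)); rewrite gE => /superdiag_utGL[a1 b1 c1].
  by rewrite utGLX ut4_exp3 a1 b1 c1 /psi /= !mul1r.
pose h (j : 'I_d) := utGL (if val j == 0%N then UT4 1%R 1%R 1%R 0%R 0%R 0%R else ut4_one 3).
have hU j : h j \in U4 3 by apply: utGL_U4.
have hsd j : superdiag psi (GLval (h j)) j.
  by apply/superdiag_utGL; rewrite /psi /h; case: (_ == _).
have [|g [gU rg gsd]] := vanish psi.
  exists (fun j => coset (Z4 3) (h j)); split=> [j | | j]; first exact/mem_quotient/hU.
    apply/(@relator_coset_eq1 3 d 3 n s isT sS2 _ _ hU (fun i => erefl)).
    by rewrite core_lift //; apply/Z4P; exists 1%R.
  by exists (h j); [apply: hU | split].
move: rg; rewrite relator_U4 // core_lift // -utGL1 => /utGL_inj/(congr1 (@u14 3)).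
by move/eqP; rewrite oner_eq0.
Qed.

Lemma expg_U4_admissible p q : prime p ->
  ((exists f, 1 <= f /\ (p = 2 -> 2 <= f) /\ q = p ^ f) \/ q = 0) -> q != 3 ->
  forall g, g \in U4 p -> (g ^+ q = 1)%g.
Proof.
move=> p_pr [[f [f_ge1 [f_ge2_p2 ->]]] | ->] q_neq3 g gU; last exact: expg0.
have [f_ge2 | f_lt2] := leqP 2 f.
  by rewrite -(subnK f_ge2) expnD mulnC expgM expg_U4_sqr // expg1n.
have f1 : f = 1 by lia.
move: q_neq3 f_ge2_p2; rewrite f1 expn1 => p_neq3 p_neq2.
apply: expg_U4_prime => //; have := prime_gt1 p_pr.
have p_neq4 : p != 4 by apply: contraTneq p_pr => ->.
by move: p_neq3 p_neq4 => /eqP ? /eqP ?; lia.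
Qed.

Theorem proposition5p5 (p d n q : nat) (s : pword p d) :
  prime p -> odd d -> 3 <= d -> 2 <= n ->
  ((exists f, 1 <= f /\ (p = 2 -> 2 <= f) /\ q = p ^ f) \/ q = 0) ->
  in_S2 s ->
  (@massey3_vanish p d (@relator p d q n s) <-> q != 3).
Proof.
move=> p_pr d_odd d_ge3 n_ge2 q_adm sS2; split=> [vanish | q_neq3].
  apply/eqP => q3; move: vanish q_adm; rewrite q3 => vanish [[f [f_ge1 [_ p_f]]] | //].
  have p3 : p = 3 by apply/eqP; rewrite -dvdn_prime2 // p_f dvdn_exp.
  by subst p; apply: (massey3_not_vanish_F3 _ n_ge2 sS2 vanish); lia.
exact: massey3_vanish_of_exponent (expg_U4_admissible p_pr q_adm q_neq3).
Qed.
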